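(* Let $(M,\circ,\mathrm{OR})$ be a free $\mathbb{D}$-module of rank 3 with scalar product and orientation, and let $x,y\in M\setminus\epsilon M$ with $x\circ x=y\circ y=1$ and with linearly independent resultants $\pi(x),\pi(y)$. Then $\mathfrak{Du}(x\circ y)=0$ if and only if the axes of $x$ and $y$ intersect. (Consequently $x\circ y=0$ iff their axes intersect orthogonally.)
   Context: $\mathbb{D}=\{a+\epsilon b: a,b\in\mathbb{R}\}$, $\epsilon^2=0$, $\mathfrak{Re},\mathfrak{Du}$ real and dual parts. Scalar product: symmetric $\mathbb{D}$-bilinear $\circ:M\times M\to\mathbb{D}$ with $\mathfrak{Re}(x\circ x)\ge0$, equality iff $x\in\epsilon M$; orientation: one of the two classes of ordered bases under $\{b'_j=A_{jk}b_k\}\sim\{b_k\}$ iff $\det\mathfrak{Re}(A)>0$. $V=M/\epsilon M$, $\pi$ the quotient (resultant) map. $E$ is the set of real 3-dimensional subspaces $P\subset M$ with $\mathfrak{Du}(x\circ y)=0$ for $x,y\in P$ and $P\cap\epsilon M=\{0\}$, a Euclidean affine space over $V$ (with $B-A:=d^ke_k$ where $e^B_i=e^A_i+\epsilon\,\epsilon_{ijk}d^ke^A_j$, $\{e_i\}$ positive orthonormal in $V$, $e^P_i\in P$ its lift). For $u\in M$ with $u\circ u=1$, its axis is the line $\{P\in E: u\in P\}$ of $E$. *)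

From HB Require Import structures.
From mathcomp Require Import all_boot all_order all_algebra.
From mathcomp Require Import reals.
Set Implicit Arguments. Unset Strict Implicit. Unset Printing Implicit Defensive.
Import Order.TTheory GRing.Theory Num.Theory.
Local Open Scope ring_scope.

Section Dual.
Variable R : realType.

(* Dual numbers a + eps b, represented as the pair (a, b). *)
Definition dual := (R * R)%type.
Definition dRe (d : dual) : R := d.1.
Definition dDu (d : dual) : R := d.2.
Definition dadd (d e : dual) : dual := (d.1 + e.1, d.2 + e.2).
Definition dmul (d e : dual) : dual := (d.1 * e.1, d.1 * e.2 + d.2 * e.1).
Definition dual_one : dual := (1, 0).
Definition dzero : dual := (0, 0).

(* The free D-module of rank 3, D^3, written in a fixed D-basis:
   the element sum_i (a_i + eps b_i) e_i is represented by (a, b). *)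
Definition dmod := ('rV[R]_3 * 'rV[R]_3)%type.
Definition madd (x y : dmod) : dmod := (x.1 + y.1, x.2 + y.2).
Definition dscale (d : dual) (x : dmod) : dmod :=
  (d.1 *: x.1, d.1 *: x.2 + d.2 *: x.1).
Definition rscale (r : R) (x : dmod) : dmod := (r *: x.1, r *: x.2).
Definition mzero : dmod := (0, 0).

Definition in_epsM (x : dmod) : Prop := x.1 = 0.
(* resultant_map map pi : M -> V = M / eps M  (identified with R^3) *)
Definition resultant_map (x : dmod) : 'rV[R]_3 := x.1.

Definition is_scalar_product (sp : dmod -> dmod -> dual) : Prop :=
  [/\ (forall x y, sp x y = sp y x),
      (forall x y z, sp (madd x y) z = dadd (sp x z) (sp y z)),
      (forall d x y, sp (dscale d x) y = dmul d (sp x y)),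
      (forall x, 0 <= dRe (sp x x)) &
      (forall x, dRe (sp x x) = 0 <-> in_epsM x)].

Definition lin_indep2 (u v : 'rV[R]_3) : Prop :=
  forall a b : R, a *: u + b *: v = 0 -> a = 0 /\ b = 0.

Definition rindep3 (p1 p2 p3 : dmod) : Prop :=
  forall a b c : R,
    madd (madd (rscale a p1) (rscale b p2)) (rscale c p3) = mzero ->
    [/\ a = 0, b = 0 & c = 0].

Definition real_subspace3 (P : dmod -> Prop) : Prop :=
  exists p1 p2 p3 : dmod, rindep3 p1 p2 p3 /\
    forall z, P z <-> exists a b c : R,
      z = madd (madd (rscale a p1) (rscale b p2)) (rscale c p3).

Definition pointE (sp : dmod -> dmod -> dual) (P : dmod -> Prop) : Prop :=
  [/\ real_subspace3 P,
      (forall x y, P x -> P y -> dDu (sp x y) = 0) &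
      (forall x, P x -> in_epsM x -> x = mzero)].

Definition axis (sp : dmod -> dmod -> dual) (u : dmod) (P : dmod -> Prop) : Prop :=
  pointE sp P /\ P u.

Definition axes_intersect (sp : dmod -> dmod -> dual) (x y : dmod) : Prop :=
  exists P : dmod -> Prop, axis sp x P /\ axis sp y P.

End Dual.

From HB Require Import structures.
From mathcomp Require Import all_boot all_order all_algebra.
From mathcomp Require Import reals.
From mathcomp Require Import ring lra.
Set Implicit Arguments. Unset Strict Implicit. Unset Printing Implicit Defensive.
Import Order.TTheory GRing.Theory Num.Theory.
Local Open Scope ring_scope.

(* Writing p = p.1 + eps p.2, the scalar product is governed by two
   symmetric real forms on V, the positive definite spRe and spDu:
   Re(p o q) = spRe p.1 q.1 and
   Du(p o q) = spDu p.1 q.1 + spRe p.1 q.2 + spRe p.2 q.1.  A point of E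
   through x and y is the real span of x, y and a third element
   w = d + eps v with d spRe-orthogonal to x.1 and y.1.  Once Du(x o y) = 0,
   the three remaining conditions Du(x o w) = Du(y o w) = Du(w o w) = 0 are
   linear in v with independent coefficient vectors x.1, y.1, d, hence
   solvable.  Conversely, any point of E containing x and y kills Du(x o y). *)

Lemma row_notin_span2 (F : fieldType) (n : nat) (u v : 'rV[F]_n) :
  (2 < n)%N -> exists c : 'rV[F]_n, forall a b : F, c != a *: u + b *: v.
Proof.
move=> n_gt2.
have : ~~ row_full (col_mx u v).
  by rewrite /row_full neq_ltn (leq_ltn_trans (rank_leq_row _)).
rewrite -sub1mx => /row_subPn[i notin].
exists (row i 1%:M) => a b; apply: contraNneq notin => ->.
by rewrite addmx_sub ?scalemx_sub // -addsmxE ?addsmxSl ?addsmxSr.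
Qed.

Section PositiveDefiniteForm.
Variables (R : realFieldType) (V : lmodType R) (g : V -> V -> R).
Hypothesis g_sym : forall u v, g u v = g v u.
Hypothesis g_linl : forall a u v w, g (a *: u + v) w = a * g u w + g v w.
Hypothesis g_pos : forall {u}, u != 0 -> 0 < g u u.

Lemma g0l w : g 0 w = 0.
Proof. by have := g_linl (-1) w w w; rewrite scaleN1r addNr mulN1r addNr. Qed.

Lemma g_addl u v w : g (u + v) w = g u w + g v w.
Proof. by rewrite -[u]scale1r g_linl mul1r scale1r. Qed.

Lemma g_scalel a u w : g (a *: u) w = a * g u w.
Proof. by rewrite -[a *: u]addr0 g_linl g0l addr0. Qed.

Lemma g_addr u v w : g w (u + v) = g w u + g w v.
Proof. by rewrite !(g_sym w) g_addl. Qed.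

Lemma g_scaler a u w : g w (a *: u) = a * g w u.
Proof. by rewrite !(g_sym w) g_scalel. Qed.

Lemma g_subr u v w : g w (u - v) = g w u - g w v.
Proof. by rewrite g_addr -scaleN1r g_scaler mulN1r. Qed.

Let g_expand := (g_addl, g_addr, g_scalel, g_scaler).

Variables u v : V.
Hypothesis uv_free : forall a b : R, a *: u + b *: v = 0 -> a = 0 /\ b = 0.

Lemma cauchy_schwarz_lt : g u v ^+ 2 < g u u * g v v.
Proof.
have u_neq0 : u != 0.
  apply/eqP => u0; have [] := @uv_free 1 0; last by move=> /eqP; rewrite oner_eq0.
  by rewrite u0 scaler0 scale0r addr0.
have uu_gt0 := g_pos u_neq0.
have w_neq0 : (- g u v) *: u + g u u *: v != 0.
  by apply: contraTneq uu_gt0 => /uv_free[_ ->]; rewrite ltxx.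
(* For this w, g w w = g u u * (g u u * g v v - g u v ^+ 2). *)
have := g_pos w_neq0; rewrite !g_expand (g_sym v u).
by rewrite -subr_gt0 -(pmulr_rgt0 _ uu_gt0); nra.
Qed.

Lemma span2_solve (al be : R) :
  exists a b : R, g u (a *: u + b *: v) = al /\ g v (a *: u + b *: v) = be.
Proof.
have gram_neq0 : g u u * g v v - g u v ^+ 2 != 0 by rewrite subr_eq0 gt_eqF ?cauchy_schwarz_lt.
exists ((al * g v v - be * g u v) / (g u u * g v v - g u v ^+ 2)).
exists ((be * g u u - al * g u v) / (g u u * g v v - g u v ^+ 2)).
by rewrite !g_expand (g_sym v u); split; field.
Qed.

Lemma exists_orthogonal_to_span2 (c : V) :
  (forall a b : R, c != a *: u + b *: v) ->
  exists2 d : V, d != 0 & g u d = 0 /\ g v d = 0.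
Proof.
move=> c_out; have [a [b [ua vb]]] := span2_solve (g u c) (g v c).
exists (c - (a *: u + b *: v)); first by rewrite subr_eq0.
by rewrite !g_subr ua vb !subrr.
Qed.

Variable d : V.
Hypotheses (d_neq0 : d != 0) (ud : g u d = 0) (vd : g v d = 0).

Lemma orthogonal_extension_free a b e :
  a *: u + b *: v + e *: d = 0 -> [/\ a = 0, b = 0 & e = 0].
Proof.
move=> abe0; have e0 : e = 0.
  have := congr1 (g^~ d) abe0; rewrite /= !g_expand g0l ud vd !mulr0 !add0r.
  by move/eqP; rewrite mulf_eq0 (gt_eqF (g_pos d_neq0)) orbF => /eqP.
by move: abe0; rewrite e0 scale0r addr0 => /uv_free[-> ->].
Qed.

Lemma orthogonal_extension_solve (al be ga : R) :
  exists z : V, [/\ g u z = al, g v z = be & g d z = ga].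
Proof.
have [a [b [ua vb]]] := span2_solve al be.
have dz : g d (a *: u + b *: v) = 0 by rewrite g_sym !g_expand ud vd !mulr0 addr0.
move: (a *: u + b *: v) ua vb dz => z uz vz dz.
exists (z + (ga / g d d) *: d).
rewrite !g_addr !g_scaler uz vz dz ud vd !mulr0 !addr0 add0r.
by rewrite divfK ?gt_eqF ?g_pos.
Qed.

End PositiveDefiniteForm.

Section DualScalarProduct.
Variables (R : realType) (sp : dmod R -> dmod R -> dual R).
Hypothesis sp_scalar : is_scalar_product sp.

Definition spRe (a b : 'rV[R]_3) : R := dRe (sp (a, 0) (b, 0)).
Definition spDu (a b : 'rV[R]_3) : R := dDu (sp (a, 0) (b, 0)).

Lemma spC p q : sp p q = sp q p.
Proof. by case: sp_scalar. Qed.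

Lemma spDl p q z : sp (madd p q) z = dadd (sp p z) (sp q z).
Proof. by case: sp_scalar. Qed.

Lemma spZl e p q : sp (dscale e p) q = dmul e (sp p q).
Proof. by case: sp_scalar. Qed.

Lemma dmod_eps_decomp (p : dmod R) : p = madd (p.1, 0) (dscale (0, 1) (p.2, 0)).
Proof.
by case: p => a b; rewrite /madd /dscale /= !(scale0r, scaler0, scale1r, add0r, addr0).
Qed.

Lemma sp_eps_decompl p q :
  sp p q = dadd (sp (p.1, 0) q) (dmul (0, 1) (sp (p.2, 0) q)).
Proof. by rewrite {1}[p]dmod_eps_decomp spDl spZl. Qed.

Lemma dRe_sp p q : dRe (sp p q) = spRe p.1 q.1.
Proof.
rewrite sp_eps_decompl /dRe /= mul0r addr0 spC.
by rewrite sp_eps_decompl /= mul0r addr0 spC.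
Qed.

Lemma dDu_sp p q : dDu (sp p q) = spDu p.1 q.1 + spRe p.1 q.2 + spRe p.2 q.1.
Proof.
rewrite sp_eps_decompl (spC (p.1, 0)) (sp_eps_decompl q) /dDu /= !(mul0r, mul1r, add0r).
rewrite (spC (q.1, 0)) (spC (q.2, 0)).
by rewrite -[(sp (p.1, 0) _).1]/(dRe _) -[(sp (p.2, 0) _).1]/(dRe _) !dRe_sp.
Qed.

Lemma spRe_sym a b : spRe a b = spRe b a.
Proof. by rewrite /spRe spC. Qed.

Lemma spRe_linl k a b c : spRe (k *: a + b) c = k * spRe a c + spRe b c.
Proof.
rewrite /spRe; have -> : (k *: a + b, 0) = madd (dscale (k, 0) (a, 0)) (b, 0).
  by rewrite /madd /dscale /= scaler0 scale0r !addr0.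
by rewrite spDl spZl.
Qed.

Lemma spRe_pos a : a != 0 -> 0 < spRe a a.
Proof.
case: sp_scalar => _ _ _ Re_ge0 Re_eq0 a_neq0.
rewrite lt_neqAle Re_ge0 andbT eq_sym; apply: contra a_neq0 => /eqP /Re_eq0 a0.
exact/eqP.
Qed.

Definition span3 (p1 p2 p3 : dmod R) (z : dmod R) : Prop :=
  exists a b c : R, z = madd (madd (rscale a p1) (rscale b p2)) (rscale c p3).

Lemma span3_first p1 p2 p3 : span3 p1 p2 p3 p1.
Proof.
exists 1, 0, 0; rewrite /madd /rscale !scale1r !scale0r !addr0.
exact: surjective_pairing.
Qed.

Lemma span3_second p1 p2 p3 : span3 p1 p2 p3 p2.
Proof.
exists 0, 1, 0; rewrite /madd /rscale !scale1r !scale0r !addr0 !add0r.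
exact: surjective_pairing.
Qed.

Lemma dDu_sp_combl a b c p1 p2 p3 q :
  dDu (sp (madd (madd (rscale a p1) (rscale b p2)) (rscale c p3)) q) =
  a * dDu (sp p1 q) + b * dDu (sp p2 q) + c * dDu (sp p3 q).
Proof.
have rscaleE r p : rscale r p = dscale (r, 0) p.
  by rewrite /rscale /dscale /= scale0r addr0.
by rewrite !rscaleE !spDl !spZl /dDu /= !mul0r !addr0.
Qed.

Lemma span3_pointE p1 p2 p3 :
  (forall a b c : R, a *: p1.1 + b *: p2.1 + c *: p3.1 = 0 ->
    [/\ a = 0, b = 0 & c = 0]) ->
  {in [:: p1; p2; p3] &, forall p q, dDu (sp p q) = 0} ->
  pointE sp (span3 p1 p2 p3).
Proof.
move=> free isotropic; split.
- by exists p1, p2, p3; split => // a b c /(congr1 fst); apply: free.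
- move=> _ _ [a [b [c ->]]] [a' [b' [c' ->]]].
  rewrite dDu_sp_combl !(spC _ (madd _ _)) !dDu_sp_combl.
  by rewrite !isotropic ?inE ?eqxx ?orbT //; ring.
- move=> _ [a [b [c ->]]] /free[-> -> ->].
  by rewrite /madd /rscale /mzero /= !scale0r !addr0.
Qed.

End DualScalarProduct.

Theorem proposition12 (R : realType) (sp : dmod R -> dmod R -> dual R)
  (Hsp : is_scalar_product sp) (x y : dmod R) :
  ~ in_epsM x -> ~ in_epsM y ->
  sp x x = dual_one R -> sp y y = dual_one R ->
  lin_indep2 (resultant_map x) (resultant_map y) ->
  (dDu (sp x y) = 0 <-> axes_intersect sp x y).
Proof.
(* x, y notin eps M is implied by the independence of their resultants. *)
move=> _ _ xx1 yy1 xy_free; split; last first.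
  by case=> P [[[_ P_isotropic _] Px] [_ Py]]; apply: P_isotropic.
move=> xy_isotropic; rewrite /resultant_map in xy_free.
move: (spRe_sym Hsp) (spRe_linl Hsp) (spRe_pos Hsp) => g_sym g_linl g_pos.
have [c c_out] := row_notin_span2 x.1 y.1 (isT : (2 < 3)%N).
have [d d_neq0 [xd yd]] := exists_orthogonal_to_span2 g_sym g_linl g_pos xy_free c_out.
(* Du(w o w) = spDu d d + 2 spRe d v, whence the factor 1/2. *)
have [v [xv yv dv]] := orthogonal_extension_solve g_sym g_linl g_pos xy_free d_neq0 xd yd
  (- (spDu sp x.1 d + spRe sp x.2 d)) (- (spDu sp y.1 d + spRe sp y.2 d)) (- spDu sp d d / 2).
have xw : dDu (sp x (d, v)) = 0 by rewrite (dDu_sp Hsp) /= xv; ring.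
have yw : dDu (sp y (d, v)) = 0 by rewrite (dDu_sp Hsp) /= yv; ring.
have ww : dDu (sp (d, v) (d, v)) = 0 by rewrite (dDu_sp Hsp) /= (spRe_sym Hsp v) dv; field.
have w_point : pointE sp (span3 x y (d, v)).
  apply: (span3_pointE Hsp) => [a b e /=|p q].
    by move/(orthogonal_extension_free g_linl g_pos xy_free d_neq0 xd yd).
  by rewrite !inE => /or3P[]/eqP-> /or3P[]/eqP->; rewrite ?xx1 ?yy1 // (spC Hsp).
by exists (span3 x y (d, v)); split; split => //; [exact: span3_first | exact: span3_second].
Qed.
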